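(* Let $V$ be a reflexive Banach space, $F: V\to\mathbb{R}$ Fréchet differentiable and convex, $G\in\Gamma_0(V)$. For $1\le k\le N$ let $V_k$ be reflexive Banach spaces and $R_k^*: V_k\to V$ bounded linear operators with $V=\sum_{k=1}^N R_k^*V_k$ and surjective adjoints $R_k: V^*\to V_k^*$, and let $d_k, G_k: V_k\times V\to\overline{\mathbb{R}}$ be proper, convex and lower semicontinuous in their first argument. Let $\tau_0\in(0,1]$ and $\omega_0>0$ be given constants, $\tau\in(0,\tau_0]$, $\omega\ge\omega_0$, and $u^{(0)}\in\operatorname{dom}G$. Let $\{u^{(n)}\}$ be generated by the additive Schwarz method: for $n\ge0$, $$w_k^{(n+1)} \in \operatorname{argmin}_{w_k\in V_k}\big\{F(u^{(n)}) + \langle F'(u^{(n)}), R_k^* w_k\rangle + \omega d_k(w_k,u^{(n)}) + G_k(w_k,u^{(n)})\big\},\ 1\le k\le N,$$ $$u^{(n+1)} = u^{(n)} + \tau\sum_{k=1}^N R_k^* w_k^{(n+1)}.$$ Then for all $n\ge0$, $$u^{(n+1)} \in \operatorname{argmin}_{u\in V}\big\{F(u^{(n)}) + \langle F'(u^{(n)}), u-u^{(n)}\rangle + M_{\tau,\omega}(u,u^{(n)})\big\},$$ where $M_{\tau,\omega}(u,v) = \tau\inf\{\sum_{k=1}^N(\omega d_k+G_k)(w_k,v) : u-v = \tau\sum_{k=1}^N R_k^*w_k,\ w_k\in V_k\} + (1-\tau N)G(v)$.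
   Context: $\Gamma_0(V)$ is the set of proper, convex, lower semicontinuous functionals $V\to\mathbb{R}\cup\{+\infty\}$; $\operatorname{dom} G=\{u: G(u)<\infty\}$; $\overline{\mathbb{R}} = \mathbb{R}\cup\{\pm\infty\}$. *)

From HB Require Import structures.
From mathcomp Require Import all_boot all_order all_algebra.
From mathcomp Require Import all_classical all_reals all_analysis.
Set Implicit Arguments. Unset Strict Implicit. Unset Printing Implicit Defensive.
Import Order.TTheory GRing.Theory Num.Theory.
Import numFieldNormedType.Exports.
Local Open Scope classical_set_scope.
Local Open Scope ring_scope.

Definition is_dual_elt (R : realType) (V : normedModType R) (f : V -> R) :=
  linear f /\ continuous f.

(* The operator-norm bound
   is written without naming the norm: whenever |f x| <= M |x| for all x,
   then |phi f| <= C M. *)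
Definition reflexive_space (R : realType) (V : normedModType R) :=
  forall phi : (V -> R) -> R,
    (forall (f g : V -> R) (a : R), is_dual_elt f -> is_dual_elt g ->
       phi (fun x => a * f x + g x) = a * phi f + phi g) ->
    (exists C : R, forall f : V -> R, is_dual_elt f ->
       forall M : R, 0 <= M -> (forall x, `|f x| <= M * `|x|) ->
       `|phi f| <= C * M) ->
    exists x : V, forall f : V -> R, is_dual_elt f -> phi f = f x.

Definition convex_fun (R : realType) (V : normedModType R) (F : V -> R) :=
  forall (x y : V) (t : R), 0 <= t <= 1 ->
    F (t *: x + (1 - t) *: y) <= t * F x + (1 - t) * F y.

Local Open Scope ereal_scope.

(* Convexity of an extended-real-valued function (t strictly in (0,1)
   to avoid the indeterminate form 0 * (+oo)). *)
Definition econvex (R : realType) (V : normedModType R) (f : V -> \bar R) :=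
  forall (x y : V) (t : R), (0 < t < 1)%R ->
    f (t *: x + (1 - t) *: y)%R <= t%:E * f x + (1 - t)%:E * f y.

Definition eproper (R : realType) (V : normedModType R) (f : V -> \bar R) :=
  (forall x, f x != -oo) /\ (exists x, f x < +oo).

Definition Gamma0 (R : realType) (V : normedModType R) (f : V -> \bar R) :=
  [/\ eproper f, econvex f & lower_semicontinuous f].

Definition argmin (T : Type) (R : realType) (f : T -> \bar R) : set T :=
  [set x | forall y, f x <= f y].

Definition Mtw (R : realType) (V : normedModType R) (N : nat)
    (Vk : 'I_N -> normedModType R) (Rs : forall k : 'I_N, Vk k -> V)
    (d Gk : forall k : 'I_N, Vk k -> V -> \bar R) (G : V -> \bar R)
    (tau omega : R) (u v : V) : \bar R :=
  tau%:E * ereal_inf [set s | exists w : (forall k : 'I_N, Vk k),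
      (u - v = tau *: \sum_(k < N) Rs k (w k))%R /\
      s = \sum_(k < N) (omega%:E * d k (w k) v + Gk k (w k) v)]
  + (1 - tau * N%:R)%:E * G v.

From HB Require Import structures.
From mathcomp Require Import all_boot all_order all_algebra.
From mathcomp Require Import all_classical all_reals all_analysis.
Import Order.TTheory GRing.Theory Num.Theory.
Import numFieldNormedType.Exports.
Local Open Scope classical_set_scope.
Local Open Scope ring_scope.

(* Only the linearity of [F'(u)] is used.  On every decomposition
   [v - u = tau * sum_k R_k^* w_k] the linear term [<F'(u), v - u>] equals
   [tau * sum_k <F'(u), R_k^* w_k>], so adding it to [M_{tau,omega}(v, u)]
   turns the infimum of the local costs into the infimum of the separable
   linearized cost [sum_k (<F'(u), R_k^* w_k> + (omega d_k + G_k)(w_k, u))].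
   The tuple [w^(n+1)] of local minimizers minimizes this cost globally and
   decomposes [u^(n+1) - u^(n)], so the infimum at [u^(n+1)] is the least one. *)

Local Open Scope ereal_scope.

Lemma argminDl {T : Type} {R : realType} (c : R) (f : T -> \bar R) (x : T) :
  argmin (fun y => c%:E + f y) x -> argmin f x.
Proof. by move=> cf_min y; rewrite -(leeD2lE _ _ (fin_numE c%:E)); exact: cf_min. Qed.

Lemma argmin_sum {R : realType} {N : nat} {X : 'I_N -> Type}
    (f : forall k, X k -> \bar R) (x : forall k, X k) :
  (forall k, argmin (f k) (x k)) ->
  argmin (fun y : forall k, X k => \sum_(k < N) f k (y k)) x.
Proof. by move=> x_min y; apply: lee_sum => k _; exact: x_min. Qed.

Lemma ereal_infDl {R : realType} (r : R) (S : set (\bar R)) :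
  ereal_inf [set r%:E + s | s in S] = r%:E + ereal_inf S.
Proof.
apply/le_anti/andP; split.
- rewrite -leeBlDl //; apply: le_ereal_inf_tmp => s Ss.
  by rewrite leeBlDl //; apply: ereal_inf_lbound; exists s.
- apply: le_ereal_inf_tmp => _ [s Ss <-].
  by rewrite leeD2l //; exact: ereal_inf_lbound.
Qed.

Section additive_decomposition.
Context {R : realType} {V : normedModType R} {N : nat}.
Context {Vk : 'I_N -> normedModType R} (Rs : forall k : 'I_N, Vk k -> V).
Variables (tau : R) (l : {linear V -> R}) (c : forall k : 'I_N, Vk k -> \bar R).
Hypothesis tau_gt0 : (0 < tau)%R.

Definition inf_decomp (T : (forall k, Vk k) -> \bar R) (x : V) : \bar R :=
  ereal_inf [set s | exists w, (x = tau *: \sum_(k < N) Rs k (w k))%R /\ s = T w].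

Definition local_cost (w : forall k, Vk k) : \bar R := \sum_(k < N) c k (w k).

Definition linearized_cost (w : forall k, Vk k) : \bar R :=
  \sum_(k < N) ((l (Rs k (w k)))%:E + c k (w k)).

Lemma linearized_costE {x : V} {w : forall k, Vk k} :
  x = (tau *: \sum_(k < N) Rs k (w k))%R ->
  linearized_cost w = (l x / tau)%:E + local_cost w.
Proof.
move=> ->; rewrite /linearized_cost big_split sumEFin /= linearZ linear_sum /=.
by rewrite mulrC mulKf // gt_eqF.
Qed.

Lemma inf_decomp_linearized (x : V) :
  (l x)%:E + tau%:E * inf_decomp local_cost x
  = tau%:E * inf_decomp linearized_cost x.
Proof.
rewrite /inf_decomp.
have -> : [set s | exists w, (x = tau *: \sum_(k < N) Rs k (w k))%R
                             /\ s = linearized_cost w]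
        = [set (l x / tau)%:E + s | s in
             [set s | exists w, (x = tau *: \sum_(k < N) Rs k (w k))%R
                                /\ s = local_cost w]].
  apply/seteqP; split=> s /=.
  - move=> [w [xw ->]]; exists (local_cost w); first by exists w.
    by rewrite (linearized_costE xw).
  - by move=> [_ [w [xw ->]] <-]; exists w; rewrite (linearized_costE xw).
rewrite ereal_infDl muleDr // -EFinM mulrC divfK ?gt_eqF //.
Qed.

Lemma inf_decomp_minimal (w0 : forall k, Vk k) (y : V) :
  argmin linearized_cost w0 ->
  inf_decomp linearized_cost (tau *: \sum_(k < N) Rs k (w0 k))%R
  <= inf_decomp linearized_cost y.
Proof.
move=> w0_min; apply: (@le_trans _ _ (linearized_cost w0)).
  by apply: ereal_inf_lbound; exists w0.
by apply: le_ereal_inf_tmp => _ [w [_ ->]]; exact: w0_min.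
Qed.

End additive_decomposition.

Lemma MtwE (R : realType) (V : normedModType R) (N : nat)
    (Vk : 'I_N -> normedModType R) (Rs : forall k : 'I_N, Vk k -> V)
    (d Gk : forall k : 'I_N, Vk k -> V -> \bar R) (G : V -> \bar R)
    (tau omega : R) (x v : V) :
  Mtw Rs d Gk G tau omega x v
  = tau%:E * inf_decomp Rs tau
      (local_cost (fun k wk => omega%:E * d k wk v + Gk k wk v)) (x - v)%R
    + (1 - tau * N%:R)%:E * G v.
Proof. by []. Qed.

Local Close Scope ereal_scope.

Theorem lemma4p5 (R : realType) (V : completeNormedModType R)
  (F : V -> R) (G : V -> \bar R) (N : nat)
  (Vk : 'I_N -> completeNormedModType R)
  (Rs : forall k : 'I_N, Vk k -> V)
  (d Gk : forall k : 'I_N, Vk k -> V -> \bar R)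
  (tau0 omega0 tau omega : R)
  (u : nat -> V) (w : nat -> forall k : 'I_N, Vk k) :
  reflexive_space V ->
  (forall x, differentiable F x) -> convex_fun F ->
  Gamma0 G ->
  (forall k, reflexive_space (Vk k)) ->
  (forall k, linear (Rs k) /\ continuous (Rs k)) ->
  (forall v : V, exists wv : (forall k : 'I_N, Vk k), v = \sum_(k < N) Rs k (wv k)) ->
  (forall k (g : Vk k -> R), is_dual_elt g ->
     exists f : V -> R, is_dual_elt f /\ forall x, f (Rs k x) = g x) ->
  (forall k (v : V), Gamma0 (fun x => d k x v) /\ Gamma0 (fun x => Gk k x v)) ->
  0 < tau0 <= 1 -> 0 < omega0 ->
  0 < tau <= tau0 -> omega0 <= omega ->
  (G (u 0%N) < +oo)%E ->
  (forall n k, argmin (fun wk : Vk k =>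
       ((F (u n))%:E + ('d F (u n) (Rs k wk))%:E
        + omega%:E * d k wk (u n) + Gk k wk (u n))%E) (w n.+1 k)) ->
  (forall n, u n.+1 = u n + tau *: \sum_(k < N) Rs k (w n.+1 k)) ->
  forall n, argmin (fun v : V =>
       ((F (u n))%:E + ('d F (u n) (v - u n))%:E
        + Mtw Rs d Gk G tau omega v (u n))%E) (u n.+1).
Proof.
move=> _ _ _ _ _ _ _ _ _ _ _ /andP[tau_gt0 _] _ _ w_min u_step n v.
pose c k (wk : Vk k) := (omega%:E * d k wk (u n) + Gk k wk (u n))%E.
have step_decomp : u n.+1 - u n = tau *: \sum_(k < N) Rs k (w n.+1 k).
  by rewrite u_step addrC addKr.
have w_argmin : argmin (linearized_cost Rs ('d F (u n)) c) (w n.+1).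
  apply: (argmin_sum (fun k wk => ('d F (u n) (Rs k wk))%:E + c k wk)%E).
  move=> k; apply: (argminDl (F (u n))) => y.
  by rewrite !addeA; exact: w_min.
rewrite !MtwE -!addeA; apply: leeD2l; rewrite !addeA; apply: leeD2r.
rewrite !(inf_decomp_linearized Rs _ _ c tau_gt0) lee_pmul2l ?lte_fin //.
by rewrite step_decomp; exact: inf_decomp_minimal.
Qed.
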